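(* Let $G=(V,E)$ be a finite simple undirected graph with $\{1,2\}\in E$; write $e_0=\{1,2\}$ and label the other edges $1,\dots,n$, $n=|E|-1$. Let $X\subseteq\mathbb R^n$ be the set of $(u_1,\dots,u_n)$ such that, setting $u_{e_0}:=0$, for every cycle $C$ of $G$ the minimum of $\{u_e:e\in C\}$ is attained at least twice. Let $w\in\mathbb R^n$ be tropically generic, i.e. its coordinates are linearly independent over $\mathbb Q$, and let $Y=\{w-u : u\in X\}$ (equivalently, the set of $u$ such that, with $w_{e_0}=u_{e_0}:=0$, for every cycle $C$ the minimum of $\{w_e-u_e: e\in C\}$ is attained at least twice). Then $X$ and $Y$ intersect transversally at each of their intersection points.
   Context: $X$ and $Y$ are regarded as rational polyhedral complexes (tropical varieties) in $\mathbb R^n$. Two such complexes $X,Y$ intersect transversally at a point $p\in X\cap Y$ if $p$ is contained in a face $\sigma$ of $X$ and a face $\tau$ of $Y$ such that the affine span of $\sigma\cup\tau$ is all of $\mathbb R^n$. *)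

From HB Require Import structures.
From mathcomp Require Import all_boot all_order all_algebra.
From mathcomp Require Import reals.

Set Implicit Arguments.
Unset Strict Implicit.
Unset Printing Implicit Defensive.

Import Order.TTheory GRing.Theory Num.Theory.
Local Open Scope ring_scope.

Definition simple_graph (V : finType) (adj : rel V) : Prop :=
  symmetric adj /\ irreflexive adj.

Definition edges (V : finType) (adj : rel V) : {set {set V}} :=
  [set [set x; y] | x in V, y in V & adj x y].

Definition is_graph_cycle (V : finType) (adj : rel V) (c : seq V) : Prop :=
  [/\ uniq c, (3 <= size c)%N & cycle adj c].

Definition cycle_edge (V : finType) (c : seq V) (e : {set V}) : Prop :=
  exists2 x, x \in c & e = [set x; next c x].

Definition min_attained_twice (R : realType) (V : finType)
    (f : {set V} -> R) (c : seq V) : Prop :=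
  exists e1 e2, [/\ e1 != e2, cycle_edge c e1, cycle_edge c e2,
                    f e1 = f e2 & forall e, cycle_edge c e -> f e1 <= f e].

Definition edge_labelling (V : finType) (adj : rel V) (e0 : {set V}) (n : nat)
    (lab : 'I_n -> {set V}) : Prop :=
  [/\ injective lab,
      forall i, lab i \in edges adj /\ lab i != e0
    & forall e, e \in edges adj -> e != e0 -> exists i, lab i = e].

Definition ext_weight (R : realType) (V : finType) (n : nat)
    (lab : 'I_n -> {set V}) (u : 'rV[R]_n) (e : {set V}) : R :=
  if [pick i | lab i == e] is Some i then u 0 i else 0.

Definition Xset (R : realType) (V : finType) (adj : rel V) (n : nat)
    (lab : 'I_n -> {set V}) : 'rV[R]_n -> Prop :=
  fun u => forall c, is_graph_cycle adj c ->
             min_attained_twice (ext_weight lab u) c.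

Definition Yset (R : realType) (V : finType) (adj : rel V) (n : nat)
    (lab : 'I_n -> {set V}) (w : 'rV[R]_n) : 'rV[R]_n -> Prop :=
  fun y => exists2 u, Xset adj lab u & y = w - u.

Definition tropically_generic (R : realType) (n : nat) (w : 'rV[R]_n) : Prop :=
  forall q : 'I_n -> rat,
    \sum_(i < n) ratr (q i) * w 0 i = 0 -> forall i, q i = 0.

Definition polyhedron (R : realType) (n : nat) (S : 'rV[R]_n -> Prop) : Prop :=
  exists (m : nat) (A : 'I_m -> 'rV[R]_n) (b : 'I_m -> R),
    forall x, S x <-> (forall j, \sum_(i < n) A j 0 i * x 0 i <= b j).

Definition affine_span (R : realType) (n : nat) (S : 'rV[R]_n -> Prop)
    : 'rV[R]_n -> Prop :=
  fun x => exists (k : nat) (P : 'I_k -> 'rV[R]_n) (lam : 'I_k -> R),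
    [/\ forall j, S (P j), \sum_(j < k) lam j = 1
      & x = \sum_(j < k) lam j *: P j].

(* A face of (a polyhedral structure on) the set X through p: a polyhedron
   contained in X. *)
Definition face_of (R : realType) (n : nat) (X S : 'rV[R]_n -> Prop) : Prop :=
  polyhedron S /\ forall x, S x -> X x.

Definition transversal_at (R : realType) (n : nat)
    (X Y : 'rV[R]_n -> Prop) (p : 'rV[R]_n) : Prop :=
  exists sigma tau, [/\ face_of X sigma, face_of Y tau, sigma p, tau p
    & forall x, affine_span (fun z => sigma z \/ tau z) x].

From HB Require Import structures.
From mathcomp Require Import all_boot all_order all_algebra.
From mathcomp Require Import reals.
From mathcomp Require Import lra.

Set Implicit Arguments.
Unset Strict Implicit.
Unset Printing Implicit Defensive.
Import Order.TTheory GRing.Theory Num.Theory.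
Local Open Scope ring_scope.

(* Membership in X only depends on the weak order of the coordinates of u
   together with the fixed coordinate 0 of e0.  So for p in X with p = w - q,
   q in X, the polyhedral cone sigma of vectors ordered at least as weakly
   as p lies in X, and tau = w - (the analogous cone of q) lies in Y.  The
   direction space of sigma contains the indicator vector of every nonzero
   level set of p, that of tau every nonzero level set of q.  A rational vector
   orthogonal to all these 0/1 vectors is orthogonal to p and to q, since each
   vector lies in the span of its nonzero level indicators, hence to w = p + q,
   so it vanishes by genericity of w: the indicators span R^n. *)

Lemma min_attained_twice_homo (R : realType) (V : finType)
    (f g : {set V} -> R) (c : seq V) :
  (forall e e', f e <= f e' -> g e <= g e') ->
  min_attained_twice f c -> min_attained_twice g c.
Proof.
move=> fg [e1 [e2 [ne c1 c2 f12 f1_min]]]; exists e1, e2; split=> //.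
  by apply/eqP; rewrite eq_le !fg // f12.
by move=> e /f1_min /fg.
Qed.

Section OrderCone.
Variables (R : realType) (n : nat).
Implicit Types (s u x : 'rV[R]_n) (v : R).

(* [None] stands for the edge e0, whose weight is pinned to 0. *)
Definition coord u (a : option 'I_n) : R := if a is Some i then u 0 i else 0.

Definition order_cone s : 'rV[R]_n -> Prop :=
  fun u => forall a b, coord s a <= coord s b -> coord u a <= coord u b.

Lemma ext_weightE (V : finType) (lab : 'I_n -> {set V}) u e :
  ext_weight lab u e = coord u [pick i | lab i == e].
Proof. by rewrite /ext_weight; case: pickP. Qed.

Lemma Xset_order_cone (V : finType) (adj : rel V) (lab : 'I_n -> {set V}) s u :
  Xset adj lab s -> order_cone s u -> Xset adj lab u.
Proof.
move=> Xs su c /Xs; apply: min_attained_twice_homo => e e'.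
by rewrite !ext_weightE; apply: su.
Qed.

Lemma order_cone_map s (h : R -> R) :
  {homo h : x y / x <= y} -> h 0 = 0 -> order_cone s (map_mx h s).
Proof.
move=> h_homo h0 a b; have hE a' : coord (map_mx h s) a' = h (coord s a').
  by case: a' => [i|] //=; rewrite mxE.
by rewrite !hE; apply: h_homo.
Qed.

Lemma level_indicator_order_cone s v : v != 0 ->
  exists a b, [/\ order_cone s a, order_cone s b &
                  map_mx (fun r => (r == v)%:R) s = a - b].
Proof.
move=> v_neq0.
(* [r == v] is [v <= r] minus [v < r]; both steps are shifted to vanish at 0. *)
pose up (strict : bool) (r : R) : R := (if strict then v < r else v <= r)%:R.
have up_homo strict : {homo up strict : r r' / r <= r'}.
  move=> r r' le_r; rewrite /up; case: strict.
  - by have [vr|_] := ltP v r; rewrite ?ler0n // (lt_le_trans vr le_r).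
  - by have [vr|_] := leP v r; rewrite ?ler0n // (le_trans vr le_r).
exists (map_mx (fun r => up false r - up false 0) s),
       (map_mx (fun r => up true r - up true 0) s); split.
- apply: order_cone_map; last by rewrite subrr.
  by move=> r r' /(up_homo false) /lerB; apply.
- apply: order_cone_map; last by rewrite subrr.
  by move=> r r' /(up_homo true) /lerB; apply.
apply/matrixP => i j; rewrite !mxE /up.
by case: (ltgtP v (s i j)); case: (ltgtP v 0) v_neq0 => //= *; lra.
Qed.

Lemma coord_sum x a : coord x a = \sum_i (Some i == a)%:R * x 0 i.
Proof.
case: a => [k|] /=; last by rewrite big1 // => i _; rewrite mul0r.
rewrite (bigD1 k) //= eqxx mul1r big1 ?addr0 // => i ik.
by rewrite (inj_eq (@Some_inj _)) (negbTE ik) mul0r.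
Qed.

Lemma polyhedron_fin (I : finType) (A : I -> 'rV[R]_n) (b : I -> R) :
  polyhedron (fun x => forall j, \sum_i A j 0 i * x 0 i <= b j).
Proof.
exists #|I|, (A \o enum_val), (b \o enum_val) => x; split=> [H j | H j] //=.
by rewrite -(enum_rankK j); apply: H.
Qed.

Lemma order_cone_polyhedron s : polyhedron (order_cone s).
Proof.
pose A (ab : option 'I_n * option 'I_n) : 'rV[R]_n :=
  (coord s ab.1 <= coord s ab.2)%R%:R *:
    \row_i ((Some i == ab.1)%:R - (Some i == ab.2)%:R).
have [m [A' [b' H]]] := polyhedron_fin A (fun _ => 0).
exists m, A', b' => x; rewrite -H.
have AE a b : \sum_i A (a, b) 0 i * x 0 i =
              (coord s a <= coord s b)%R%:R * (coord x a - coord x b).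
  rewrite [coord x a]coord_sum [coord x b]coord_sum -sumrB mulr_sumr.
  by apply: eq_bigr => i _; rewrite !mxE -mulrA mulrBl.
split=> [sx [a b] | H' a b le_ab]; rewrite ?AE.
  by case: (leP (coord s a)) => [/sx|_]; rewrite ?mul1r ?subr_le0 ?mul0r.
by have := H' (a, b); rewrite AE le_ab mul1r subr_le0.
Qed.

Lemma polyhedron_reflect (S : 'rV[R]_n -> Prop) w :
  polyhedron S -> polyhedron (fun y => S (w - y)).
Proof.
move=> [m [A [b H]]].
exists m, (fun j => - A j), (fun j => b j - \sum_i A j 0 i * w 0 i) => y.
have sumAE j : \sum_i A j 0 i * (w - y) 0 i =
              \sum_i A j 0 i * w 0 i + \sum_i (- A j) 0 i * y 0 i.
  by rewrite -big_split; apply: eq_bigr => i _; rewrite !mxE mulrBr mulNr.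
by rewrite H; split=> le_Ab j; have := le_Ab j; rewrite sumAE; lra.
Qed.

End OrderCone.

Section DirectionSpace.
Variables (R : realType) (n : nat).
Implicit Types (S T : 'rV[R]_n -> Prop) (x y : 'rV[R]_n).

Definition direction_space S x : Prop :=
  exists k (P : 'I_k -> 'rV[R]_n) (mu : 'I_k -> R),
    [/\ forall j, S (P j), \sum_j mu j = 0 & x = \sum_j mu j *: P j].

Lemma direction_space0 S : direction_space S 0.
Proof.
by exists 0%N, (fun _ => 0), (fun _ => 0); split; rewrite ?big_ord0 // => -[].
Qed.

Lemma direction_spaceB S a b : S a -> S b -> direction_space S (a - b).
Proof.
move=> Sa Sb; exists 2%N, (fun j => if j == ord0 then a else b),
  (fun j => if j == ord0 then 1 else -1).
by split=> [j||]; [case: ifP | rewrite !big_ord_recl big_ord0 /= addr0 subrr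
  | rewrite !big_ord_recl big_ord0 /= addr0 scale1r scaleN1r].
Qed.

Lemma direction_spaceD S x y :
  direction_space S x -> direction_space S y -> direction_space S (x + y).
Proof.
move=> [k1 [P1 [mu1 [S1 sum1 ->]]]] [k2 [P2 [mu2 [S2 sum2 ->]]]].
pose glue (U : Type) (f1 : 'I_k1 -> U) (f2 : 'I_k2 -> U) j :=
  match split j with inl j1 => f1 j1 | inr j2 => f2 j2 end.
have sum_glue (U : nmodType) (f1 : 'I_k1 -> U) f2 :
    \sum_j glue U f1 f2 j = \sum_j f1 j + \sum_j f2 j.
  rewrite big_split_ord; congr (_ + _); apply: eq_bigr => j _.
    by rewrite /glue (@unsplitK k1 k2 (inl j)).
  by rewrite /glue (@unsplitK k1 k2 (inr j)).
exists (k1 + k2)%N, (glue _ P1 P2), (glue _ mu1 mu2); split.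
- by move=> j; rewrite /glue; case: (split j).
- by rewrite sum_glue sum1 sum2 addr0.
- rewrite -sum_glue; apply: eq_bigr => j _.
  by rewrite /glue; case: (split j).
Qed.

Lemma direction_spaceZ S c x : direction_space S x -> direction_space S (c *: x).
Proof.
move=> [k [P [mu [SP sum0 ->]]]]; exists k, P, (fun j => c * mu j); split=> //.
  by rewrite -mulr_sumr sum0 mulr0.
by rewrite scaler_sumr; apply: eq_bigr => j _; rewrite scalerA.
Qed.

Lemma direction_space_sum S (I : finType) (F : I -> 'rV[R]_n) :
  (forall i, direction_space S (F i)) -> direction_space S (\sum_i F i).
Proof.
move=> SF; apply: (big_ind (direction_space S)) => //.
  exact: direction_space0.
exact: direction_spaceD.
Qed.

Lemma direction_space_sub S T x :
  (forall y, S y -> T y) -> direction_space S x -> direction_space T x.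
Proof.
by move=> ST [k [P [mu [SP sum0 ->]]]]; exists k, P, mu; split=> // j; apply/ST.
Qed.

Lemma direction_space_reflect S w x :
  direction_space S x -> direction_space (fun y => S (w - y)) x.
Proof.
move=> [k [P [mu [SP sum0 ->]]]].
exists k, (fun j => w - P j), (fun j => - mu j); split.
- by move=> j; rewrite subKr.
- by rewrite sumrN sum0 oppr0.
- rewrite [RHS](eq_bigr (fun j => mu j *: P j - mu j *: w)) ?sumrB -?scaler_suml.
    by rewrite sum0 scale0r subr0.
  by move=> j _; rewrite scaleNr scalerBr opprB.
Qed.

Lemma affine_span_direction S p x :
  S p -> direction_space S x -> affine_span S (p + x).
Proof.
move=> Sp [k [P [mu [SP sum0 ->]]]].
pose cons (U : Type) (u : U) (f : 'I_k -> U) (j : 'I_k.+1) :=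
  if unlift ord0 j is Some j' then f j' else u.
have sum_cons (U : nmodType) (u : U) f : \sum_j cons U u f j = u + \sum_j f j.
  by rewrite big_ord_recl /cons unlift_none; under eq_bigr do rewrite liftK.
exists k.+1, (cons _ p P), (cons _ 1 mu); split.
- by move=> j; rewrite /cons; case: (unlift ord0 j).
- by rewrite sum_cons sum0 addr0.
- rewrite -{1}[p]scale1r -sum_cons; apply: eq_bigr => j _.
  by rewrite /cons; case: (unlift ord0 j).
Qed.

End DirectionSpace.

Section LevelMatrix.
Variables (R : realType) (n : nat).
Implicit Types (s : 'rV[R]_n).

(* The zero level is excluded: it is tied to the pinned coordinate of e0, so
   its indicator is not a direction of the order cone. *)
Definition level_mx (F : pzSemiRingType) s : 'M[F]_n :=
  \matrix_(i, j) ((s 0 j == s 0 i) && (s 0 i != 0))%:R.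

Lemma map_level_mx s : map_mx ratr (level_mx rat s) = level_mx R s.
Proof. by apply/matrixP => i j; rewrite !mxE rmorph_nat. Qed.

Lemma row_level_mx_direction s i :
  direction_space (order_cone s) (row i (level_mx R s)).
Proof.
have [si0|si_neq0] := eqVneq (s 0 i) 0.
  rewrite (_ : row _ _ = 0); first exact: direction_space0.
  by apply/rowP => j; rewrite !mxE si0 eqxx andbF.
have [a [b [sa sb ab]]] := level_indicator_order_cone s si_neq0.
rewrite (_ : row _ _ = a - b); first exact: direction_spaceB.
by rewrite -ab; apply/rowP => j; rewrite !mxE si_neq0 andbT.
Qed.

Lemma level_mx_direction s u :
  direction_space (order_cone s) (u *m level_mx R s).
Proof.
rewrite mulmx_sum_row; apply: direction_space_sum => i.
exact/direction_spaceZ/row_level_mx_direction.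
Qed.

Lemma sub_level_mx s : (s <= level_mx R s)%MS.
Proof.
(* Each level set occurs once per element, hence the division by its size. *)
pose N (r : R) : R := #|[pred k | s 0 k == r]|%:R.
apply/submxP; exists (\row_i (s 0 i / N (s 0 i))); apply/rowP => j.
rewrite !mxE; transitivity (\sum_(i | s 0 i == s 0 j) s 0 j / N (s 0 j)).
  rewrite sumr_const -mulr_natr divfK // pnatr_eq0 -lt0n.
  by apply/card_gt0P; exists j; rewrite inE /=.
rewrite big_mkcond; apply: eq_bigr => i _; rewrite !mxE eq_sym.
have [->|_] := eqVneq (s 0 i) (s 0 j); last by rewrite mulr0.
by have [->|_] := eqVneq (s 0 j) 0; rewrite ?mul0r ?mulr1.
Qed.

Lemma level_mx_orthogonal s (v : 'rV[R]_n) :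
  v *m (level_mx R s)^T = 0 -> v *m s^T = 0.
Proof.
move=> vL; have [c ->] := submxP (sub_level_mx s).
by rewrite trmx_mul mulmxA vL mul0mx.
Qed.

End LevelMatrix.

Lemma tropically_generic_eq0 (R : realType) n (w : 'rV[R]_n) (v : 'rV[rat]_n) :
  tropically_generic w -> map_mx ratr v *m w^T = 0 -> v = 0.
Proof.
move=> gen vw; apply/rowP => j; rewrite mxE; apply: (gen (v 0)).
transitivity ((map_mx ratr v *m w^T) 0 0); last by rewrite vw mxE.
by rewrite mxE; apply: eq_bigr => i _; rewrite !mxE.
Qed.

Lemma level_mx_row_full (R : realType) n (p q w : 'rV[R]_n) :
  tropically_generic w -> w = p + q ->
  row_full (col_mx (level_mx R p) (level_mx R q)).
Proof.
move=> gen def_w; rewrite -!map_level_mx -map_col_mx /row_full mxrank_map.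
rewrite -mxrank_tr -[_ == n]/(row_free _) -kermx_eq0.
apply: contraT => /rowV0Pn[v /sub_kermxP]; rewrite tr_col_mx mul_mx_row.
move=> /eqP; rewrite row_mx_eq0 => /andP[/eqP vp /eqP vq].
have ortho (s : 'rV[R]_n) :
    v *m (level_mx rat s)^T = 0 -> map_mx ratr v *m s^T = 0.
  move=> vs; apply: level_mx_orthogonal.
  by rewrite -map_level_mx map_trmx -map_mxM vs map_mx0.
move=> nz_v; suff v0 : v = 0 by rewrite v0 eqxx in nz_v.
apply: (tropically_generic_eq0 gen).
by rewrite def_w linearD /= mulmxDr !ortho ?addr0.
Qed.

Theorem lemma2p2 (R : realType) (V : finType) (adj : rel V) (v1 v2 : V)
    (n : nat) (lab : 'I_n -> {set V}) (w : 'rV[R]_n) :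
  simple_graph adj ->
  adj v1 v2 ->
  edge_labelling adj [set v1; v2] lab ->
  tropically_generic w ->
  forall p : 'rV[R]_n, Xset adj lab p -> Yset adj lab w p ->
    transversal_at (Xset adj lab) (Yset adj lab w) p.
Proof.
move=> _ _ _ gen p Xp [q Xq def_p].
have def_w : w = p + q by rewrite def_p subrK.
exists (order_cone p), (fun y => order_cone q (w - y)); split.
- by split; [exact: order_cone_polyhedron | move=> u; exact: Xset_order_cone].
- split; first exact/polyhedron_reflect/order_cone_polyhedron.
  by move=> y qy; exists (w - y); [exact: Xset_order_cone qy | rewrite subKr].
- by [].
- by rewrite def_p subKr.
move=> x; rewrite -(addrNK p x) addrC; apply: affine_span_direction; first by left.
have /sub_addsmxP[[u1 u2] ->] : (x - p <= level_mx R p + level_mx R q)%MS.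
  by rewrite addsmxE submx_full // (level_mx_row_full gen def_w).
apply: direction_spaceD.
  by apply: direction_space_sub (level_mx_direction p u1) => y; left.
apply: direction_space_sub (direction_space_reflect w (level_mx_direction q u2)).
by move=> y; right.
Qed.
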